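(* Let $L$ be a finite extension of $\mathbb{Z}_\mathrm{max}$. Then $\mathrm{ui}(L/\mathbb{Z}_\mathrm{max})<\infty$.
   Context: A semifield is a commutative semiring (both operations commutative monoids, distributive law) in which every nonzero element is a unit. $\mathbb{Z}_\mathrm{max}=\mathbb{Z}\cup\{-\infty\}$ is the semifield with addition $\max$ and multiplication ordinary addition. An extension of a semifield $K$ is a semifield $L$ with an injective homomorphism $K\to L$; it is finite if $L$ is thereby a finitely generated $K$-semimodule. The unit index is $\mathrm{ui}(L/K)=|L^\times/K^\times|$, where $L^\times$ is the group of units of $L$ and $K^\times$ is identified with its image. *)

From HB Require Import structures.
From mathcomp Require Import all_boot all_order all_algebra.
From mathcomp Require Import classical_sets cardinality.
Set Implicit Arguments. Unset Strict Implicit. Unset Printing Implicit Defensive.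
Import Order.TTheory GRing.Theory Num.Theory.
Local Open Scope ring_scope.
Local Open Scope classical_set_scope.

(* Z_max = Z ∪ {-oo}: None represents -oo, Some n represents n : int.
   Semiring addition is max, semiring multiplication is integer addition. *)
Definition Zmax := option int.

Definition zmax_add (x y : Zmax) : Zmax :=
  match x, y with
  | None, _ => y
  | _, None => x
  | Some a, Some b => Some (Num.max a b)
  end.

Definition zmax_mul (x y : Zmax) : Zmax :=
  match x, y with
  | Some a, Some b => Some (a + b)
  | _, _ => None
  end.

Definition zmax_zero : Zmax := None.
Definition zmax_one : Zmax := Some 0.

Lemma zmax_addA : associative zmax_add.
Proof. by case=> [a|] [b|] [c|] //=; rewrite maxA. Qed.
Lemma zmax_addC : commutative zmax_add.
Proof. by case=> [a|] [b|] //=; rewrite maxC. Qed.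
Lemma zmax_add0 : left_id zmax_zero zmax_add.
Proof. by case. Qed.

HB.instance Definition _ := Choice.on Zmax.
HB.instance Definition _ := GRing.isNmodule.Build Zmax zmax_addA zmax_addC zmax_add0.

Lemma zmax_mulA : associative zmax_mul.
Proof. by case=> [a|] [b|] [c|] //=; rewrite addrA. Qed.
Lemma zmax_mulC : commutative zmax_mul.
Proof. by case=> [a|] [b|] //=; rewrite addrC. Qed.
Lemma zmax_mul1 : left_id zmax_one zmax_mul.
Proof. by case=> [a|] //=; rewrite add0r. Qed.
Lemma zmax_mulDl : left_distributive zmax_mul zmax_add.
Proof. by case=> [a|] [b|] [c|] //=; rewrite addr_maxl. Qed.
Lemma zmax_mul0 : left_zero zmax_zero zmax_mul.
Proof. by []. Qed.
Lemma zmax_one_neq0 : zmax_one != zmax_zero.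
Proof. by []. Qed.

HB.instance Definition _ := GRing.Nmodule_isComNzSemiRing.Build Zmax
  zmax_mulA zmax_mulC zmax_mul1 zmax_mulDl zmax_mul0 zmax_one_neq0.

Definition sunit (R : comPzSemiRingType) (x : R) : Prop := exists y : R, x * y = 1.

Definition semifield (R : comPzSemiRingType) : Prop :=
  forall x : R, x != 0 -> sunit x.

(* L is finitely generated as a K-semimodule via f : K -> L (k . x := f k * x). *)
Definition finite_ext (K L : comPzSemiRingType) (f : K -> L) : Prop :=
  exists s : seq L, forall x : L,
    exists c : 'I_(size s) -> K, x = \sum_(i < size s) f (c i) * s`_i.

(* L^x / K^x : the set of cosets  u * f(K^x)  for u in L^x. *)
Definition unit_cosets (K L : comPzSemiRingType) (f : K -> L) : set (set L) :=
  [set C | exists u : L, sunit u /\ C = [set u * f k | k in [set k : K | sunit k]]].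

Definition finite_unit_index (K L : comPzSemiRingType) (f : K -> L) : Prop :=
  finite_set (unit_cosets f).

From HB Require Import structures.
From mathcomp Require Import all_boot all_order all_algebra.
From mathcomp Require Import classical_sets cardinality.
From mathcomp Require Import zify.
Set Implicit Arguments. Unset Strict Implicit. Unset Printing Implicit Defensive.
Import Order.TTheory GRing.Theory Num.Theory.
Local Open Scope ring_scope.
Local Open Scope classical_set_scope.

(** Since 1 + 1 = 1 in Z_max, L is additively idempotent and ordered by
  x <= y iff x + y = y.  Write t^k for the image of k : Z and w for the sum of
  the generators s_i.  Every element is bounded by some t^N w, and as each
  nonzero s_j is invertible, w <= t^K s_j for a K independent of j.  In a
  nonzero u = sum_i t^(e_i) s_i, normalise the largest exponent e among the
  terms with s_i != 0 to 0: every term with e_i < e - K is absorbed by that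
  largest term.  Hence u is t^e times a sum in which each s_i carries a
  coefficient from the finite set {0, t^0, t^-1, ..., t^-K}, so there are
  finitely many cosets u Z^x. *)

Section NaturalOrder.
Variable L : comPzSemiRingType.
Implicit Types x y z : L.

Definition sle x y := x + y = y.

Lemma sle_trans y x z : sle x y -> sle y z -> sle x z.
Proof. by move=> hxy hyz; rewrite /sle -hyz addrA hxy. Qed.

Lemma sle_anti x y : sle x y -> sle y x -> x = y.
Proof. by move=> hxy hyx; rewrite -hyx addrC hxy. Qed.

Lemma sle0x x : sle 0 x.
Proof. exact: add0r. Qed.

Lemma sle_mul2r z x y : sle x y -> sle (x * z) (y * z).
Proof. by move=> hxy; rewrite /sle -mulrDl hxy. Qed.

Lemma sle_mul2l z x y : sle x y -> sle (z * x) (z * y).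
Proof. by rewrite ![z * _]mulrC; apply: sle_mul2r. Qed.

Lemma sle_sumr (I : Type) (r : seq I) (P : pred I) (F : I -> L) y :
  (forall i, P i -> sle (F i) y) -> sle (\sum_(i <- r | P i) F i) y.
Proof.
move=> hF; elim/big_rec: _ => [|i x Pi hx]; first exact: sle0x.
by rewrite /sle -addrA hx hF.
Qed.

Lemma sle_sum (I : finType) (F G : I -> L) :
  (forall i, sle (F i) (G i)) -> sle (\sum_i F i) (\sum_i G i).
Proof. by move=> hFG; rewrite /sle -big_split; apply: eq_bigr => i _; apply: hFG. Qed.

Lemma sle_sum_term (I : finType) (F : I -> L) i :
  (forall x, x + x = x) -> sle (F i) (\sum_j F j).
Proof. by move=> addxx; rewrite /sle (bigD1 i) //= addrA addxx. Qed.

End NaturalOrder.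

Definition unit_coset (K L : comPzSemiRingType) (f : K -> L) (u : L) : set L :=
  [set u * f k | k in [set k : K | sunit k]].

Lemma sunit_neq0 (R : comPzSemiRingType) (x : R) : (1 : R) != 0 -> sunit x -> x != 0.
Proof. by move=> oner_neq0 [y xy1]; apply: contraNneq oner_neq0 => x0; rewrite -xy1 x0 mul0r. Qed.

Lemma sunitM (R : comPzSemiRingType) (x y : R) : sunit x -> sunit y -> sunit (x * y).
Proof. by move=> [x' xx'] [y' yy']; exists (x' * y'); rewrite mulrACA xx' yy' mulr1. Qed.

Lemma unit_coset_mulr (K L : comPzSemiRingType) (f : {rmorphism K -> L}) u k :
  sunit k -> unit_coset f (u * f k) = unit_coset f u.
Proof.
move=> [k' kk']; have k'_unit : sunit k' by exists k; rewrite mulrC.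
apply/seteqP; split=> _ [j j_unit <-].
  by exists (k * j); [apply: sunitM => //; exists k' | rewrite rmorphM mulrA].
exists (k' * j); first exact: sunitM.
by rewrite rmorphM mulrA -(mulrA u) -rmorphM kk' rmorph1 mulr1.
Qed.

Section ZmaxAlgebra.
Variables (L : comPzSemiRingType) (f : {rmorphism Zmax -> L}).

Definition tpow (k : int) : L := f (Some k).

Lemma tpowD a b : tpow (a + b) = tpow a * tpow b.
Proof. exact: (rmorphM f (Some a) (Some b)). Qed.

Lemma tpow_sle a b : a <= b -> sle (tpow a) (tpow b).
Proof.
move=> ab; rewrite /sle /tpow -rmorphD.
by congr (f (Some _)); apply/max_idPr.
Qed.

Lemma addrxx_Zmax_alg (x : L) : x + x = x.
Proof. by rewrite -[x]mul1r -mulrDl -(rmorph1 f) -rmorphD. Qed.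

Lemma sunit_Some (k : int) : sunit (Some k : Zmax).
Proof. by exists (Some (- k)); congr Some; rewrite addrN. Qed.

Definition trunc_coef (K : nat) (o : option 'I_K.+1) : L :=
  if o is Some m then tpow (- (m : nat)%:Z) else 0.

Lemma tpow_mul_trunc_coef (K : nat) (e n : int) : n - K%:Z <= e <= n ->
  tpow n * trunc_coef (Some (inord `|n - e|%N : 'I_K.+1)) = tpow e.
Proof.
case/andP=> lb ub; have ne_abs : (`|n - e|%N)%:Z = n - e by rewrite gez0_abs ?subr_ge0.
rewrite /= inordK; last by rewrite ltnS -lez_nat ne_abs; lia.
by rewrite -tpowD ne_abs opprB addrC subrK.
Qed.

End ZmaxAlgebra.

Section FiniteExtension.
Variables (L : comPzSemiRingType) (f : {rmorphism Zmax -> L}) (s : seq L).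
Hypothesis s_spans : forall x : L,
  exists c : 'I_(size s) -> Zmax, x = \sum_(i < size s) f (c i) * s`_i.

Let w := \sum_(i < size s) s`_i.

Lemma sle_tpow_mul_sum x : exists N, sle x (tpow f N * w).
Proof.
have [c ->] := s_spans x; pose e i := odflt 0 (c i).
exists (\max_i `|e i|%N)%:Z; rewrite /w mulr_sumr; apply: sle_sum => i.
apply: sle_mul2r; case ci: (c i) => [k|]; last by rewrite rmorph0; apply: sle0x.
apply: tpow_sle; apply: le_trans (lez_abs k) _; rewrite lez_nat.
by have := leq_bigmax (F := fun i => `|e i|%N) i; rewrite /e ci.
Qed.

Section Truncation.
Variable K : nat.
Hypothesis w_sle_generators : forall j : 'I_(size s), s`_j != 0 -> sle w (tpow f K%:Z * s`_j).

Lemma sle_tpow_mul_generator e n (i j : 'I_(size s)) : s`_j != 0 -> e + K%:Z <= n ->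
  sle (tpow f e * s`_i) (tpow f n * s`_j).
Proof.
move=> sj_neq0 eKn; apply: (@sle_trans _ (tpow f e * w)).
  exact/sle_mul2l/(sle_sum_term (fun i : 'I_(size s) => s`_i))/addrxx_Zmax_alg.
apply: sle_trans (sle_mul2l _ (w_sle_generators sj_neq0)) _.
by rewrite mulrA -tpowD; apply/sle_mul2r/tpow_sle.
Qed.

Lemma unit_normal_form u : u != 0 ->
  exists (d : {ffun 'I_(size s) -> option 'I_K.+1}) (n : int),
    u = tpow f n * \sum_i trunc_coef f (d i) * s`_i.
Proof.
move=> u_neq0; have [c u_def] := s_spans u.
pose e i := odflt 0 (c i); pose P i := (c i != None) && (s`_i != 0).
have zero_term i : ~~ P i -> f (c i) * s`_i = 0.
  by rewrite negb_and !negbK => /orP[/eqP-> | /eqP->]; rewrite (rmorph0, mulr0) ?mul0r.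
have [i0 P_i0] : exists i, P i.
  apply/existsP; apply: contraNT u_neq0 => /existsPn noP.
  by rewrite u_def big1 // => i _; apply: zero_term.
have [ix P_ix e_max] := arg_maxP e P_i0; set n := e ix.
have cE i : c i != None -> c i = Some (e i) by rewrite /e; case: (c i).
pose kept i := P i && (n - K%:Z <= e i).
pose d : {ffun 'I_(size s) -> option 'I_K.+1} :=
  [ffun i => if kept i then Some (inord `|n - e i|%N) else None].
have kept_term i : kept i -> tpow f n * (trunc_coef f (d i) * s`_i) = f (c i) * s`_i.
  move=> kept_i; case/andP: (kept_i) => P_i lb; rewrite ffunE kept_i mulrA.
  rewrite tpow_mul_trunc_coef; last by rewrite lb; exact: e_max.
  by rewrite (cE i) //; case/andP: P_i.
have ix_kept : kept ix by rewrite /kept P_ix lerBlDr lerDl.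
exists d, n; rewrite u_def mulr_sumr; apply: sle_anti.
  apply: sle_sumr => i _; have [kept_i|dropped_i] := boolP (kept i).
    by rewrite -kept_term //; apply/sle_sum_term/addrxx_Zmax_alg.
  have [P_i|/zero_term->] := boolP (P i); last exact: sle0x.
  have sjx_neq0 : s`_ix != 0 by case/andP: P_ix.
  rewrite (cE i); last by case/andP: P_i.
  apply: (sle_trans (sle_tpow_mul_generator i sjx_neq0 (_ : e i + K%:Z <= n))).
    by move: dropped_i; rewrite /kept P_i /=; lia.
  have -> : tpow f n * s`_ix = f (c ix) * s`_ix by rewrite (cE ix) //; case/andP: P_ix.
  by rewrite -kept_term //; apply/sle_sum_term/addrxx_Zmax_alg.
apply: sle_sum => i; have [/kept_term->|dropped_i] := boolP (kept i).
  exact: addrxx_Zmax_alg.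
by rewrite ffunE (negbTE dropped_i) mul0r mulr0; apply: sle0x.
Qed.

End Truncation.

Hypothesis L_semifield : semifield L.
Hypothesis oneL_neq0 : (1 : L) != 0.

Lemma sum_generators_neq0 : w != 0.
Proof.
have [N one_sle] := sle_tpow_mul_sum 1; apply: contra_neq oneL_neq0 => w0.
by move: one_sle; rewrite /sle w0 mulr0 addr0.
Qed.

Lemma sle_sum_tpow_generator j : s`_j != 0 -> exists K : nat, sle w (tpow f K%:Z * s`_j).
Proof.
move=> sj_neq0; have [y sjy] := L_semifield sj_neq0.
have [z wz] := L_semifield sum_generators_neq0.
have [N wwy_le] := sle_tpow_mul_sum (w * w * y).
exists `|N|%N; apply: (sle_trans _ (sle_mul2r _ (tpow_sle f (lez_abs N)))).
have := sle_mul2r (z * s`_j) wwy_le.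
(* multiplying by w^-1 s_j turns w^2 s_j^-1 into w *)
have -> : w * w * y * (z * s`_j) = w * (w * z) * (s`_j * y).
  by rewrite mulrACA [y * _]mulrC -(mulrA w w z).
by rewrite wz sjy !mulr1 mulrA -(mulrA _ w z) wz mulr1.
Qed.

Lemma uniform_sle_sum_tpow_generator :
  exists K : nat, forall j : 'I_(size s), s`_j != 0 -> sle w (tpow f K%:Z * s`_j).
Proof.
have /fin_all_exists [Kj hKj] : forall j : 'I_(size s),
    exists K : nat, s`_j != 0 -> sle w (tpow f K%:Z * s`_j).
  move=> j; case: (eqVneq s`_j 0) => [_|]; first by exists 0%N.
  by case/sle_sum_tpow_generator=> K hK; exists K.
exists (\max_j Kj j) => j sj_neq0; apply: sle_trans (hKj j sj_neq0) _.
by apply: sle_mul2r; apply: tpow_sle; rewrite lez_nat leq_bigmax.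
Qed.

End FiniteExtension.

Theorem mainTheorem3 (L : comPzSemiRingType) (f : {rmorphism Zmax -> L}) :
  semifield L -> injective f -> finite_ext f -> finite_unit_index f.
Proof.
move=> L_semifield f_inj [s s_spans].
have oneL_neq0 : (1 : L) != 0.
  by apply/eqP => oneL0; have /f_inj : f 1 = f 0 by rewrite rmorph1 rmorph0.
have [K w_sle_generators] := uniform_sle_sum_tpow_generator s_spans L_semifield oneL_neq0.
pose coset_of (d : {ffun 'I_(size s) -> option 'I_K.+1}) :=
  unit_coset f (\sum_i trunc_coef f (d i) * s`_i).
apply: (sub_finite_set _ (finite_image coset_of (@finite_finset _ setT))).
move=> _ [u [u_unit ->]].
have [d [n ->]] := unit_normal_form s_spans w_sle_generators (sunit_neq0 oneL_neq0 u_unit).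
exists d => //; set v := \sum_i _.
change (unit_coset f v = unit_coset f (tpow f n * v)).
by rewrite mulrC /tpow (unit_coset_mulr f v (sunit_Some n)).
Qed.
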